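(* Let $G=(V,E)$ be a finite graph and $\psi:(0,+\infty)\to\mathbb R$ a $C^1$ concave function with $\psi'(1)=0$. Suppose a function $f:V\times(0,\infty)\to(0,\infty)$ satisfies $$\Gamma^\psi(f)\le\frac{D_1}{t}+D_2\quad\text{at all vertices and all }t>0$$ for some positive constants $D_1,D_2$. Then for all $x,y\in V$ and $t>0$, $$f(x,t)\le f(y,t)\exp\left\{d(x,y)\sqrt{\frac{H_\psi\mu_{\max}}{w_{\min}}}\sqrt{\frac{D_1}{t}+D_2}\right\}.$$
   Context: Graphs: $G=(V,E)$ is a connected, locally finite graph; each edge $xy$ carries a weight $w_{xy}>0$, and $\mu:V\to(0,\infty)$ is a vertex measure; $y\sim x$ means $xy\in E$; $d$ is the graph distance; $\mu_{\max}=\max_x\mu(x)$, $w_{\min}=\min_{xy\in E}w_{xy}$. Laplacian: $\Delta f(x)=\frac{1}{\mu(x)}\sum_{y\sim x}w_{xy}(f(y)-f(x))$. For $f:V\to(0,\infty)$: $\Delta^\psi f(x)=\Delta\big[\psi\big(\tfrac{f}{f(x)}\big)\big](x)$; $\overline\psi(s)=\psi'(1)(s-1)-(\psi(s)-\psi(1))$, $\Gamma^\psi f=\Delta^{\overline\psi}f$ (applied to $f(\cdot,t)$ at each time). Harnack constant: $H_\psi=\sup_{x>1}\frac{\log^2x}{\overline\psi(x)}$ (assumed finite). *)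

From HB Require Import structures.
From mathcomp Require Import all_boot all_order all_algebra.
From mathcomp Require Import all_classical all_reals all_analysis.
Set Implicit Arguments. Unset Strict Implicit. Unset Printing Implicit Defensive.
Import Order.TTheory GRing.Theory Num.Theory.
Local Open Scope classical_set_scope.
Local Open Scope ring_scope.

Section GraphDefs.
Variables (R : realType) (V : finType).

Definition walk_len (e : rel V) (x y : V) (n : nat) : Prop :=
  exists p : seq V, [/\ path e x p, last x p = y & size p = n].

(* graph distance: least length of a walk from x to y (0 if unreachable;
   irrelevant for connected graphs) *)
Definition gdist (e : rel V) (x y : V) : nat :=
  match pselect (exists n, `[< walk_len e x y n >]) with
  | left h => ex_minn h
  | right _ => 0%N
  end.

Definition glap (e : rel V) (w : V -> V -> R) (mu : V -> R) (g : V -> R) (x : V) : R :=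
  (mu x)^-1 * \sum_(y | e x y) w x y * (g y - g x).

Definition psibar (psi : R -> R) (s : R) : R :=
  derive1 psi 1 * (s - 1) - (psi s - psi 1).

Definition lap_phi (e : rel V) (w : V -> V -> R) (mu : V -> R) (phi : R -> R)
  (g : V -> R) (x : V) : R :=
  glap e w mu (fun y => phi (g y / g x)) x.

Definition Gamma_psi (e : rel V) (w : V -> V -> R) (mu : V -> R) (psi : R -> R)
  (g : V -> R) (x : V) : R :=
  lap_phi e w mu (psibar psi) g x.

Definition H_psi (psi : R -> R) : R :=
  sup [set ln s ^+ 2 / psibar psi s | s in `]1, +oo[%classic].

Definition mu_max (mu : V -> R) : R := sup (range mu).

Definition w_min (e : rel V) (w : V -> V -> R) : R :=
  inf [set w xy.1 xy.2 | xy in [set xy : V * V | e xy.1 xy.2]].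

End GraphDefs.

(* Along an edge from a to z, put s = f(a)/f(z). Concavity and psi'(1) = 0 make
   psibar >= 0, so every term of Gamma^psi f(z) is nonnegative and the single term
   w_za psibar(s) / mu(z) is already bounded by D1/t + D2. If s > 1, the definition
   of H_psi gives log^2 s <= H_psi psibar(s) <= H_psi (mu_max / w_min) (D1/t + D2),
   which bounds f(a)/f(z) by the exponential factor for one edge; multiplying these
   bounds along a shortest path from x to y gives the theorem. *)

From HB Require Import structures.
From mathcomp Require Import all_boot all_order all_algebra.
From mathcomp Require Import all_classical all_reals all_analysis.
From mathcomp Require Import ring lra.
Import Order.TTheory GRing.Theory Num.Theory numFieldNormedType.Exports.
Local Open Scope classical_set_scope.
Local Open Scope ring_scope.
Set Implicit Arguments. Unset Strict Implicit. Unset Printing Implicit Defensive.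

Section Concave.
Variable R : realType.
Implicit Types (psi : R -> R) (c s h : R).

Definition pos_concave psi := forall a b l, 0 < a -> 0 < b -> 0 <= l <= 1 ->
  l * psi a + (1 - l) * psi b <= psi (l * a + (1 - l) * b).

Lemma pos_concave_chord_slope psi s c h : pos_concave psi -> 0 < s -> s < c ->
  s - c <= h -> h < 0 ->
  h^-1 * (psi (h + c) - psi c) <= (psi s - psi c) / (s - c).
Proof.
move=> hc s0 sc hsc h0.
have sc0 : s - c < 0 by rewrite subr_lt0.
set l := h / (s - c).
have l0 : 0 <= l by rewrite /l ltW // nmulr_rgt0 // invr_lt0.
have l1 : l <= 1 by rewrite /l ler_ndivrMr // mul1r.
have := hc s c l s0 (lt_trans s0 sc); rewrite l0 l1 => /(_ isT).
have -> : l * s + (1 - l) * c = h + c by rewrite /l; field; rewrite lt_eqF.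
move=> hconc.
have : h^-1 * (psi (h + c) - psi c) <= h^-1 * (l * (psi s - psi c)).
  by apply: ler_wnM2l; [rewrite invr_le0 ltW | lra].
suff -> : h^-1 * (l * (psi s - psi c)) = (psi s - psi c) / (s - c) by [].
by rewrite /l; field; rewrite !lt_eqF.
Qed.

Lemma pos_concave_le_crit psi c s : pos_concave psi ->
  derivable psi c 1 -> derive1 psi c = 0 -> 0 < s -> s < c -> psi s <= psi c.
Proof.
move=> hc hd hd0 s0 sc; rewrite leNgt; apply/negP => hlt.
have sc0 : s - c < 0 by rewrite subr_lt0.
set m := (psi s - psi c) / (s - c).
have m0 : m < 0 by rewrite /m pmulr_rlt0 ?subr_gt0 // invr_lt0.
have : (fun h => h^-1 *: ((psi \o shift c) (h *: 1) - psi c)) @ 0^' --> 0.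
  by rewrite -[X in _ --> X]hd0 derive1E; exact: hd.
move/cvgrPdist_lt/(_ (- m)); rewrite oppr_gt0 => /(_ m0).
rewrite near_withinE => /nbhs_ballP [d /= d0 hball].
set h := Num.max (s - c) (- (d / 2)).
have h0 : h < 0 by rewrite /h gt_max sc0 oppr_lt0 divr_gt0.
have hsc : s - c <= h by rewrite /h le_max lexx.
have hd2 : - (d / 2) <= h by rewrite /h le_max lexx orbT.
have hb : ball 0 d h.
  by rewrite /ball /= sub0r normrN ltr0_norm // ltrNl; apply: lt_le_trans hd2; lra.
have := hball h hb (ltr0_neq0 h0).
rewrite /= sub0r -[h%:A]/(h * 1) mulr1 -[h^-1 *: _]/(h^-1 * _) => /ltr_normlW.
have := pos_concave_chord_slope hc s0 sc hsc h0.
rewrite -/m; lra.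
Qed.

Lemma psibar1 psi : psibar psi 1 = 0.
Proof. by rewrite /psibar !subrr mulr0 subr0. Qed.

Lemma psibar_ge0 psi s : pos_concave psi -> derivable psi 1 1 ->
  derive1 psi 1 = 0 -> (forall s, 1 < s -> 0 < psibar psi s) ->
  0 < s -> 0 <= psibar psi s.
Proof.
move=> hc hd hd0 hpb s0.
have [s1|s1|->] := ltgtP s 1; last by rewrite psibar1.
- rewrite /psibar hd0 mul0r sub0r oppr_ge0 subr_le0.
  exact: pos_concave_le_crit.
- exact/ltW/hpb.
Qed.

Lemma ln_sqr_le_H_psibar psi s :
  has_ubound [set ln s ^+ 2 / psibar psi s | s in `]1, +oo[%classic] ->
  1 < s -> 0 < psibar psi s -> ln s ^+ 2 <= H_psi psi * psibar psi s.
Proof.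
move=> hub s1 hpb; rewrite -ler_pdivrMr //; apply: ub_le_sup hub _ _.
by exists s; rewrite //= in_itv /= andbT.
Qed.

End Concave.

Section FiniteImage.
Variables (R : realType) (T : finType) (g : T -> R) (P : set T).

Lemma fin_image_has_ubound : has_ubound (g @` P).
Proof.
exists (\sum_v `|g v|) => _ [v _ <-]; apply: le_trans (ler_norm (g v)) _.
by rewrite (bigD1 v) //= lerDl; apply: sumr_ge0.
Qed.

Lemma fin_image_has_lbound : has_lbound (g @` P).
Proof.
exists (- \sum_v `|g v|) => _ [v _ <-]; rewrite lerNl.
apply: le_trans (ler_norm (- g v)) _; rewrite normrN.
by rewrite (bigD1 v) //= lerDl; apply: sumr_ge0.
Qed.

End FiniteImage.

Section WeightedGraph.
Variables (R : realType) (V : finType) (e : rel V) (w : V -> V -> R).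

Lemma mu_le_mu_max (mu : V -> R) z : mu z <= mu_max mu.
Proof. by apply: ub_le_sup; [exact: fin_image_has_ubound | exists z]. Qed.

Lemma w_min_le a b : e a b -> w_min e w <= w a b.
Proof. by move=> ab; apply: ge_inf; [exact: fin_image_has_lbound | exists (a, b)]. Qed.

Lemma w_min_gt0 a b : (forall x y, e x y -> 0 < w x y) -> e a b -> 0 < w_min e w.
Proof.
move=> wpos ab; set m := \big[Num.min/1]_(p : V * V | e p.1 p.2) w p.1 p.2.
have m0 : 0 < m.
  apply: (big_ind (fun r : R => 0 < r)) => // [r r' r0 r'0|p /wpos //].
  by rewrite lt_min r0 r'0.
apply: (lt_le_trans m0); apply: lb_le_inf; first by exists (w a b), (a, b).
by move=> _ [p ep <-]; rewrite /m (bigD1 p) //= ge_min lexx.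
Qed.

Lemma glap_ge_edge (mu h : V -> R) x a : 0 < mu x ->
  (forall y, e x y -> 0 <= w x y) -> (forall y, e x y -> 0 <= h y) ->
  h x = 0 -> e x a -> (mu x)^-1 * (w x a * h a) <= glap e w mu h x.
Proof.
move=> mux w0 h0 hx0 xa; rewrite /glap ler_pM2l ?invr_gt0 // (bigD1 a) //=.
rewrite hx0 subr0 lerDl; apply: sumr_ge0 => y /andP[xy _].
by rewrite subr0 mulr_ge0 ?w0 ?h0.
Qed.

End WeightedGraph.

Section EdgeHarnack.
Variables (R : realType) (V : finType) (e : rel V) (w : V -> V -> R).
Variables (mu : V -> R) (psi : R -> R).
Hypotheses (esym : symmetric e) (wpos : forall x y, e x y -> 0 < w x y).
Hypothesis mupos : forall x, 0 < mu x.
Hypothesis psibar_nneg : forall s, 0 < s -> 0 <= psibar psi s.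
Hypothesis psibar_pos : forall s, 1 < s -> 0 < psibar psi s.
Hypothesis H_psi_ub :
  has_ubound [set ln s ^+ 2 / psibar psi s | s in `]1, +oo[%classic].

Lemma Gamma_psi_ge_edge (g : V -> R) z a : (forall y, 0 < g y) -> e z a ->
  (mu z)^-1 * (w z a * psibar psi (g a / g z)) <= Gamma_psi e w mu psi g z.
Proof.
move=> gpos za; apply: glap_ge_edge => //.
- by move=> y /wpos/ltW.
- by move=> y _; apply: psibar_nneg; rewrite divr_gt0.
- by rewrite divff ?gt_eqF // psibar1.
Qed.

Lemma harnack_edge (g : V -> R) B a z : (forall y, 0 < g y) ->
  Gamma_psi e w mu psi g z <= B -> e a z ->
  g a <= g z * expR (Num.sqrt (H_psi psi * mu_max mu / w_min e w) * Num.sqrt B).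
Proof.
move=> gpos hB az; have za : e z a by rewrite esym.
set s := g a / g z; have s0 : 0 < s by rewrite divr_gt0.
have -> : g a = g z * s by rewrite /s mulrC divfK // gt_eqF.
rewrite ler_pM2l //; have [s1|s1] := leP s 1.
  by apply: le_trans s1 _; rewrite -expR0 ler_expR mulr_ge0 ?sqrtr_ge0.
have muz := mupos z; have wza := wpos za; have wm0 := w_min_gt0 wpos za.
have psB : psibar psi s <= mu z / w z a * B.
  have := le_trans (Gamma_psi_ge_edge gpos za) hB.
  by rewrite -/s ler_pdivrMl // mulrAC ler_pdivlMr // mulrC.
have B0 : 0 <= B.
  rewrite -(pmulr_rge0 _ (divr_gt0 muz wza)).
  exact: le_trans (ltW (psibar_pos s1)) psB.
have ratio : mu z / w z a <= mu_max mu / w_min e w.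
  apply: ler_pM; [exact: ltW | by rewrite invr_ge0 ltW | exact: mu_le_mu_max |].
  by rewrite lef_pV2 ?posrE ?w_min_le.
have hln := ln_sqr_le_H_psibar H_psi_ub s1 (psibar_pos s1).
have H0 : 0 <= H_psi psi.
  by rewrite -(pmulr_lge0 _ (psibar_pos s1)); apply: le_trans (sqr_ge0 _) hln.
have lnAB : ln s ^+ 2 <= H_psi psi * mu_max mu / w_min e w * B.
  apply: (le_trans hln); rewrite -!mulrA ler_wpM2l // mulrA.
  exact: le_trans psB (ler_wpM2r B0 ratio).
rewrite -(lnK s0) ler_expR -sqrtrM ?mulr_ge0 ?invr_ge0 ?(ltW wm0) //; last first.
  exact: le_trans (ltW muz) (mu_le_mu_max _ z).
by rewrite -(ger0_norm (ln_ge0 (ltW s1))) -sqrtr_sqr ler_wsqrtr.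
Qed.

End EdgeHarnack.

Section Walks.
Variables (V : finType) (e : rel V).

Lemma walk_len_gdist x y : connect e x y -> walk_len e x y (gdist e x y).
Proof.
move=> /connectP[p hp ->]; rewrite /gdist; case: pselect => [hex|[]].
  by case: ex_minnP => n /asboolP.
by exists (size p); apply/asboolP; exists p.
Qed.

Lemma walk_len_le_expR (R : realType) (g : V -> R) C x y n :
  (forall a b, e a b -> g a <= g b * expR C) ->
  walk_len e x y n -> g x <= g y * expR (n%:R * C).
Proof.
move=> hedge [p [hp <- <-]]; elim: p x hp => [|z p IH] x /=.
  by rewrite mul0r expR0 mulr1.
move=> /andP[xz hp]; apply: le_trans (hedge _ _ xz) _.
rewrite -addn1 natrD mulrDl mul1r expRD mulrA ler_pM2r ?expR_gt0 //.
exact: IH.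
Qed.

End Walks.

Theorem mainTheorem14 (R : realType) (V : finType) (e : rel V)
  (w : V -> V -> R) (mu : V -> R) (psi : R -> R) (f : V -> R -> R) (D1 D2 : R) :
  (* finite connected simple graph with symmetric positive edge weights *)
  symmetric e -> irreflexive e -> (forall x y, connect e x y) ->
  (forall x y, w x y = w y x) -> (forall x y, e x y -> 0 < w x y) ->
  (forall x, 0 < mu x) ->
  (* psi is C^1 and concave on (0, +oo), with psi'(1) = 0 *)
  (forall s, 0 < s -> derivable psi s 1) ->
  (forall s : R, 0 < s -> {for s, continuous (derive1 psi : R -> R)}) ->
  (forall a b l, 0 < a -> 0 < b -> 0 <= l <= 1 ->
     l * psi a + (1 - l) * psi b <= psi (l * a + (1 - l) * b)) ->
  derive1 psi 1 = 0 ->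
  (* H_psi is finite *)
  (forall s, 1 < s -> 0 < psibar psi s) ->
  has_ubound [set ln s ^+ 2 / psibar psi s | s in `]1, +oo[%classic] ->
  (* f positive and the gradient estimate *)
  0 < D1 -> 0 < D2 ->
  (forall x t, 0 < t -> 0 < f x t) ->
  (forall x t, 0 < t -> Gamma_psi e w mu psi (fun y => f y t) x <= D1 / t + D2) ->
  forall x y t, 0 < t ->
    f x t <= f y t * expR ((gdist e x y)%:R
                 * Num.sqrt (H_psi psi * mu_max mu / w_min e w)
                 * Num.sqrt (D1 / t + D2)).
Proof.
move=> esym _ econn _ wpos mupos hder _ hconc hd0 hpb hub _ _ fpos hG x y t t0.
have pb0 s : 0 < s -> 0 <= psibar psi s :=
  psibar_ge0 hconc (hder 1 ltr01) hd0 hpb.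
rewrite -mulrA; apply: (walk_len_le_expR (g := fun v => f v t)).
  move=> a b ab.
  exact: (harnack_edge esym wpos mupos pb0 hpb hub (fun v => fpos v t t0) (hG b t t0) ab).
exact: walk_len_gdist.
Qed.
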